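(* For every $m\in\mathbb{N}$, $\eta^{m\text{-}mult}_{(2,2)}(\ell_2;c_0)=\frac m2$, where $\eta^{m\text{-}mult}_{(2,2)}(\ell_2;c_0)$ means $\eta^{m\text{-}mult}_{(2,2)}(\ell_2,\dots,\ell_2;c_0)$ with $m$ copies of $\ell_2$.
   Context: For vectors $x_1,\dots,x_n$ in a Banach space $E$ and $q>0$, $\|(x_k)_{k=1}^n\|_{w,q}:=\sup_{\varphi\in B_{E^*}}\left(\sum_{k=1}^n|\varphi(x_k)|^q\right)^{1/q}$, where $B_{E^*}$ is the closed unit ball of the dual. $\mathcal{L}(E_1,\dots,E_m;F)$ is the space of bounded $m$-linear maps. For $p,q>0$, the multilinear $m$-index of $(p,q)$-summability $\eta^{m\text{-}mult}_{(p,q)}(E_1,\dots,E_m;F)$ is the infimum of all real numbers $s$ with the property: for every $T\in\mathcal{L}(E_1,\dots,E_m;F)$ there is a constant $C\ge0$ (depending only on $m$ and $T$) such that $$\left(\sum_{k_1,\dots,k_m=1}^n\|T(x^{(1)}_{k_1},\dots,x^{(m)}_{k_m})\|^p\right)^{1/p}\le C n^{s}\prod_{i=1}^m\|(x^{(i)}_{k})_{k=1}^n\|_{w,q}$$ for all positive integers $n$ and all $x^{(i)}_k\in E_i$, $1\le k\le n$, $1\le i\le m$. *)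

From HB Require Import structures.
From mathcomp Require Import all_boot all_order all_algebra.
From mathcomp Require Import all_classical all_reals all_analysis.
Set Implicit Arguments. Unset Strict Implicit. Unset Printing Implicit Defensive.
Import Order.TTheory GRing.Theory Num.Theory.
Import numFieldNormedType.Exports.
Local Open Scope classical_set_scope.
Local Open Scope ring_scope.

Section Defs.
Variable R : realType.

Definition in_l2 (x : nat -> R) : Prop :=
  cvgn (series (fun k => x k ^+ 2)).

Definition l2norm (x : nat -> R) : R :=
  Num.sqrt (limn (series (fun k => x k ^+ 2))).

Definition in_c0 (y : nat -> R) : Prop := y @ \oo --> 0.

Definition c0norm (y : nat -> R) : R := sup (range (fun k => `|y k|)).

(** Closed unit ball of the dual of l_2 : linear functionals on l_2
    with operator norm <= 1 (values outside l_2 are irrelevant). *)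
Definition dual_ball_l2 (phi : (nat -> R) -> R) : Prop :=
  (forall (a : R) (u v : nat -> R), in_l2 u -> in_l2 v ->
      phi (fun k => a * u k + v k) = a * phi u + phi v) /\
  (forall u, in_l2 u -> `|phi u| <= l2norm u).

Definition weak_norm_l2 (q : R) (n : nat) (x : 'I_n -> nat -> R) : R :=
  sup [set powR (\sum_(k < n) powR `|phi (x k)| q) q^-1 | phi in dual_ball_l2].

Definition upd (m : nat) (x : 'I_m -> nat -> R) (i : 'I_m) (u : nat -> R)
  : 'I_m -> nat -> R := fun j => if j == i then u else x j.

(** Bounded m-linear maps l_2 x ... x l_2 -> c_0  (m copies of l_2).
    Such a map is represented by a function on m-tuples of sequences;
    only its values on tuples of l_2 vectors matter. *)
Definition bounded_mlinear_l2_c0 (m : nat)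
    (T : ('I_m -> nat -> R) -> nat -> R) : Prop :=
  (forall x, (forall i, in_l2 (x i)) -> in_c0 (T x)) /\
  (forall x i (a : R) (u v : nat -> R), (forall j, in_l2 (x j)) ->
      in_l2 u -> in_l2 v ->
      forall k, T (upd x i (fun t => a * u t + v t)) k =
                a * T (upd x i u) k + T (upd x i v) k) /\
  (exists C : R, forall x, (forall i, in_l2 (x i)) ->
      c0norm (T x) <= C * \prod_(i < m) l2norm (x i)).

(** The set of admissible exponents s in the definition of the
    multilinear m-index of (p,q)-summability of L(l_2,...,l_2; c_0).
    x i k stands for x^{(i)}_k  (indices are 0-based). *)
Definition admissible_exponent (m : nat) (p q s : R) : Prop :=
  forall T, bounded_mlinear_l2_c0 T ->
  exists C : R, 0 <= C /\
    forall (n : nat) (x : 'I_m -> 'I_n -> nat -> R), (0 < n)%N ->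
      (forall i k, in_l2 (x i k)) ->
      powR (\sum_(kk : {ffun 'I_m -> 'I_n})
               powR `|c0norm (T (fun i => x i (kk i)))| p) p^-1
      <= C * powR n%:R s * \prod_(i < m) weak_norm_l2 q (x i).

(** eta^{m-mult}_{(p,q)}(l_2,...,l_2; c_0), as an extended real
    (infimum of the admissible exponents; +oo if there are none). *)
Definition eta_mult_l2_c0 (m : nat) (p q : R) : \bar R :=
  ereal_inf [set s%:E | s in admissible_exponent m p q].

End Defs.

(* Upper bound: for a bounded [T], each of the [n ^ m] terms satisfies
   [||T(x_k1, ..., x_km)|| <= ||T|| prod_i ||x_ki||], and every [||x_k||] is at
   most the weak 2-norm of the family, as witnessed by the normalised functional
   [<., x_k>] on a truncation of [x_k].  Hence the sum is
   [<= ||T||^2 n^m prod_i w_2(x^(i))^2], giving the exponent [m/2].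
   Lower bound: the product map [(x_1, ..., x_m) |-> (x_1(f 1) ... x_m(f m))_f],
   with coordinates indexed by all multi-indices [f], is bounded from
   [l_2 x ... x l_2] to [c_0].  On the unit vectors [e_1, ..., e_n] (weak 2-norm
   at most [1]) it gives [n ^ m] values of norm [1], so [n^(m/2) <= C n^s] for all
   [n], forcing [s >= m/2]. *)

From HB Require Import structures.
From mathcomp Require Import all_boot all_order all_algebra.
From mathcomp Require Import all_classical all_reals all_analysis.
From mathcomp Require Import ring lra.
Set Implicit Arguments. Unset Strict Implicit. Unset Printing Implicit Defensive.
Import Order.TTheory GRing.Theory Num.Theory.
Import numFieldNormedType.Exports.
Local Open Scope classical_set_scope.
Local Open Scope ring_scope.

Section SequenceSpaces.
Variable R : realType.
Implicit Types (u y : nat -> R) (N : nat).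

Lemma sum_sqr_ge0 (I : Type) (r : seq I) (P : pred I) (u : I -> R) :
  0 <= \sum_(i <- r | P i) u i ^+ 2.
Proof. by apply: sumr_ge0 => i _; exact: sqr_ge0. Qed.

Lemma powR_sum_sqr (I : finType) (u : I -> R) :
  powR (\sum_i powR `|u i| 2) 2^-1 = Num.sqrt (\sum_i u i ^+ 2).
Proof.
under eq_bigr do rewrite powR_mulrn // real_normK ?num_real //.
by rewrite powR12_sqrt // sum_sqr_ge0.
Qed.

Lemma cauchy_schwarz_sum (I : finType) (u c : I -> R) :
  (\sum_i u i * c i) ^+ 2 <= (\sum_i u i ^+ 2) * (\sum_i c i ^+ 2).
Proof.
set S := \sum_i u i * c i; set U := \sum_i u i ^+ 2; set C := \sum_i c i ^+ 2.
have [C0|C_neq0] := eqVneq C 0.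
  have c0 i : c i = 0.
    move/eqP: C0; rewrite psumr_eq0 => [/allP/(_ i (mem_index_enum i))|j _]; last exact: sqr_ge0.
    by rewrite implyTb sqrf_eq0 => /eqP.
  by rewrite /S big1 ?expr0n ?C0 ?mulr0 // => i _; rewrite c0 mulr0.
have C_gt0 : 0 < C by rewrite lt_def C_neq0 sum_sqr_ge0.
(* Lagrange: expand the nonnegative sum of squares of [C u_i - S c_i]. *)
have : 0 <= \sum_i (C * u i - S * c i) ^+ 2 by exact: sum_sqr_ge0.
have -> : \sum_i (C * u i - S * c i) ^+ 2 = C * (C * U - S ^+ 2).
  transitivity (\sum_i (C ^+ 2 * u i ^+ 2 - 2 * C * S * (u i * c i) + S ^+ 2 * c i ^+ 2)).
    by apply: eq_bigr => i _; ring.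
  rewrite !big_split /= sumrN -!mulr_sumr -/S -/U -/C; ring.
by rewrite pmulr_rge0 // subr_ge0 mulrC.
Qed.

Lemma abs_sum_mul_le (I : finType) (u c : I -> R) :
  `|\sum_i u i * c i| <= Num.sqrt (\sum_i u i ^+ 2) * Num.sqrt (\sum_i c i ^+ 2).
Proof.
rewrite -sqrtrM ?sum_sqr_ge0 // -sqrtr_sqr ler_sqrt ?mulr_ge0 ?sum_sqr_ge0 //.
exact: cauchy_schwarz_sum.
Qed.

Lemma l2norm_ge0 u : 0 <= l2norm u.
Proof. exact: sqrtr_ge0. Qed.

Lemma sum_sqr_le_l2lim u N : in_l2 u ->
  \sum_(j < N) u j ^+ 2 <= limn (series (fun k => u k ^+ 2)).
Proof.
move=> hu; have := nondecreasing_cvgn_le _ hu N; rewrite seriesEord; apply.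
apply/nondecreasing_seqP => n.
by rewrite /series /= big_ord_recr /= lerDl sqr_ge0.
Qed.

Lemma sqrt_sum_sqr_le_l2norm u N : in_l2 u ->
  Num.sqrt (\sum_(j < N) u j ^+ 2) <= l2norm u.
Proof.
move=> hu; rewrite ler_sqrt ?sum_sqr_le_l2lim //.
by apply: le_trans (sum_sqr_le_l2lim 0 hu); rewrite big_ord0.
Qed.

Lemma abs_le_l2norm u t : in_l2 u -> `|u t| <= l2norm u.
Proof.
move=> hu; apply: le_trans (sqrt_sum_sqr_le_l2norm t.+1 hu).
rewrite -sqrtr_sqr ler_sqrt ?sum_sqr_ge0 // big_ord_recr /= lerDr.
exact: sum_sqr_ge0.
Qed.

Lemma in_l2_cvg0 u : in_l2 u -> u @ \oo --> 0.
Proof.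
move=> /cvg_series_cvg_0 hu2; apply/cvgr0Pnorm_lt => e e_gt0.
near=> n; have : `|u n ^+ 2| < e ^+ 2.
  by near: n; apply: (cvgr0_norm_lt _ hu2); exact: exprn_gt0.
by rewrite normrX ltr_pXn2r ?nnegrE // ltW.
Unshelve. all: end_near.
Qed.

Section FiniteSupport.
Variables (u : nat -> R) (N : nat).
Hypothesis u_supp : forall t, (N <= t)%N -> u t = 0.

Let series_sqr_eventually :
  \forall n \near \oo, series (fun k => u k ^+ 2) n = \sum_(j < N) u j ^+ 2.
Proof.
near=> n; rewrite seriesEord.
have Nn : (N <= n)%N by near: n; exists N.
rewrite -(subnKC Nn) /= big_split_ord /= [X in _ + X]big1 ?addr0 // => j _.
by rewrite u_supp ?leq_addr // expr0n.
Unshelve. all: end_near.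
Qed.

Lemma in_l2_fin_supp : in_l2 u.
Proof. by apply/cvg_ex; eexists; exact: cvg_near_cst series_sqr_eventually. Qed.

Lemma l2norm_fin_supp : l2norm u = Num.sqrt (\sum_(j < N) u j ^+ 2).
Proof. by rewrite /l2norm (cvg_lim _ (cvg_near_cst _ series_sqr_eventually)). Qed.

End FiniteSupport.

Lemma c0_has_ubound y : in_c0 y -> has_ubound (range (fun k => `|y k|)).
Proof.
move=> y0; apply/bounded_fun_has_ubound/cvg_seq_bounded/cvg_ex.
by exists 0; rewrite -(normr0 R); exact: cvg_norm.
Qed.

Lemma abs_le_c0norm y k : in_c0 y -> `|y k| <= c0norm y.
Proof. by move=> /c0_has_ubound y_ub; apply: ub_le_sup y_ub _ _; exists k. Qed.

Lemma c0norm_ge0 y : in_c0 y -> 0 <= c0norm y.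
Proof. by move=> /(abs_le_c0norm 0); exact: le_trans. Qed.

Lemma weak_norm_l2E n (x : 'I_n -> nat -> R) : weak_norm_l2 2 x =
  sup [set Num.sqrt (\sum_(k < n) phi (x k) ^+ 2) | phi in @dual_ball_l2 R].
Proof.
by congr sup; apply/seteqP; split => _ [phi phi_ball <-]; exists phi;
  rewrite // powR_sum_sqr.
Qed.

Lemma weak_norm_l2_ubound n (x : 'I_n -> nat -> R) : (forall k, in_l2 (x k)) ->
  has_ubound [set Num.sqrt (\sum_(k < n) phi (x k) ^+ 2) | phi in @dual_ball_l2 R].
Proof.
move=> x_l2; exists (Num.sqrt (\sum_k l2norm (x k) ^+ 2)) => _ [phi [_ phi_le] <-].
rewrite ler_sqrt ?sum_sqr_ge0 //; apply: ler_sum => k _.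
rewrite -real_normK ?num_real // ler_sqr ?nnegrE ?l2norm_ge0 //.
exact: phi_le.
Qed.

(* When the truncation of [y] vanishes, division by [0] makes this the zero functional. *)
Definition trunc_dual y N (u : nat -> R) : R :=
  \sum_(j < N) u j * (y j / Num.sqrt (\sum_(i < N) y i ^+ 2)).

Lemma trunc_dual_ball y N : dual_ball_l2 (trunc_dual y N).
Proof.
split=> [a u v _ _|u u_l2].
  rewrite /trunc_dual mulr_sumr -big_split /=.
  by apply: eq_bigr => j _; rewrite mulrDl -mulrA.
set P := \sum_(i < N) y i ^+ 2.
have coef_le1 : Num.sqrt (\sum_(j < N) (y j / Num.sqrt P) ^+ 2) <= 1.
  under eq_bigr do rewrite expr_div_n.
  rewrite -mulr_suml sqr_sqrtr ?sum_sqr_ge0 // -/P -sqrtr1 ler_sqrt //.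
  by have [->|P_neq0] := eqVneq P 0; rewrite ?mul0r ?ler01 ?divff.
apply: le_trans (abs_sum_mul_le _ _) _.
apply: le_trans (sqrt_sum_sqr_le_l2norm N u_l2).
by rewrite -[leRHS]mulr1 ler_wpM2l ?sqrtr_ge0.
Qed.

Lemma trunc_dual_self y N : trunc_dual y N y = Num.sqrt (\sum_(i < N) y i ^+ 2).
Proof.
rewrite /trunc_dual; set P := \sum_(i < N) y i ^+ 2.
under eq_bigr do rewrite mulrA -expr2.
have P_ge0 : 0 <= P by exact: sum_sqr_ge0.
rewrite -mulr_suml -/P -{1}(sqr_sqrtr P_ge0) expr2 -mulrA.
by have [->|sP_neq0] := eqVneq (Num.sqrt P) 0; rewrite ?mul0r ?divff ?mulr1.
Qed.

Lemma l2norm_le_weak_norm_l2 n (x : 'I_n -> nat -> R) k : (forall k, in_l2 (x k)) ->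
  l2norm (x k) <= weak_norm_l2 2 x.
Proof.
move=> x_l2; rewrite weak_norm_l2E; set w := sup _.
have trunc_le N : Num.sqrt (\sum_(i < N) x k i ^+ 2) <= w.
  apply: le_trans (ub_le_sup (weak_norm_l2_ubound x_l2) _); last first.
    by exists (trunc_dual (x k) N) => //; exact: trunc_dual_ball.
  rewrite (bigD1 k) //= trunc_dual_self ler_sqrt ?sqr_sqrtr ?lerDl ?sum_sqr_ge0 //.
  by rewrite addr_ge0 ?sqr_ge0 ?sum_sqr_ge0.
have w_ge0 : 0 <= w by apply: le_trans (trunc_le 0%N); exact: sqrtr_ge0.
rewrite -(ger0_norm w_ge0) -sqrtr_sqr ler_sqrt ?sqr_ge0 //.
apply: limr_le; first exact: x_l2.
apply: nearW => N; rewrite seriesEord /= -ler_sqrt ?sqr_ge0 // sqrtr_sqr ger0_norm //.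
exact: trunc_le.
Qed.

Lemma weak_norm_l2_ge0 n (x : 'I_n -> nat -> R) : (0 < n)%N ->
  (forall k, in_l2 (x k)) -> 0 <= weak_norm_l2 2 x.
Proof.
by move=> n_gt0 /(l2norm_le_weak_norm_l2 (Ordinal n_gt0)); exact: le_trans (l2norm_ge0 _).
Qed.

Lemma powR_natr_half (x : R) m : 0 <= x -> powR x (m%:R / 2) = Num.sqrt (x ^+ m).
Proof. by move=> x_ge0; rewrite powRrM powR_mulrn // powR12_sqrt // exprn_ge0. Qed.

Lemma sum_ffun_cst m n (c : R) : \sum_(kk : {ffun 'I_m -> 'I_n}) c = n%:R ^+ m * c.
Proof. by rewrite sumr_const card_ffun !card_ord -natrX mulr_natl. Qed.

Lemma admissible_exponent_half m : admissible_exponent m (2 : R) 2 (m%:R / 2).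
Proof.
move=> T [T_c0 [_ [C T_le]]]; exists `|C|; split=> // n x n_gt0 x_l2.
set W := \prod_(i < m) weak_norm_l2 2 (x i).
have W_ge0 : 0 <= W by apply: prodr_ge0 => i _; exact: weak_norm_l2_ge0.
have term_le (kk : {ffun 'I_m -> 'I_n}) :
    c0norm (T (fun i => x i (kk i))) ^+ 2 <= (`|C| * W) ^+ 2.
  have xkk_l2 i : in_l2 (x i (kk i)) by [].
  rewrite ler_sqr ?nnegrE ?mulr_ge0 ?c0norm_ge0 //; last exact: T_c0.
  apply: le_trans (T_le _ xkk_l2) _.
  have prod_ge0 : 0 <= \prod_(i < m) l2norm (x i (kk i)).
    by apply: prodr_ge0 => i _; exact: l2norm_ge0.
  apply: le_trans (ler_wpM2r prod_ge0 (ler_norm C)) _.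
  apply: ler_wpM2l => //; apply: ler_prod => i _.
  by rewrite l2norm_ge0 l2norm_le_weak_norm_l2.
rewrite powR_sum_sqr powR_natr_half // -mulrA mulrCA.
have -> : `|C| * W = Num.sqrt ((`|C| * W) ^+ 2).
  by rewrite sqrtr_sqr normrM normr_id (ger0_norm W_ge0).
rewrite -sqrtrM ?exprn_ge0 // ler_sqrt ?mulr_ge0 ?exprn_ge0 // -sum_ffun_cst.
exact: ler_sum.
Qed.

(* The coordinates of [c_0] are indexed by the multi-indices [f : 'I_m -> nat],
   enumerated through [pickle]; the [f]-th coordinate is [x_1(f 1) ... x_m(f m)]. *)
Definition tensor_c0 m (x : 'I_m -> nat -> R) (j : nat) : R :=
  if pickle_inv j : option {ffun 'I_m -> nat} is Some f then \prod_(i < m) x i (f i)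
  else 0.

Lemma tensor_c0_upd m (x : 'I_m -> nat -> R) i (a : R) u v j :
  tensor_c0 (upd x i (fun t => a * u t + v t)) j =
  a * tensor_c0 (upd x i u) j + tensor_c0 (upd x i v) j.
Proof.
rewrite /tensor_c0; case: (pickle_inv j) => [f|]; last by rewrite mulr0 addr0.
have prod_upd (w : nat -> R) :
    \prod_(k < m) upd x i w k (f k) = w (f i) * \prod_(k < m | k != i) x k (f k).
  rewrite (bigD1 i) //= /upd eqxx; congr (_ * _).
  by apply: eq_bigr => k /negbTE ->.
by rewrite !prod_upd mulrDl mulrA.
Qed.

Lemma abs_tensor_c0_le m (x : 'I_m -> nat -> R) j : (forall i, in_l2 (x i)) ->
  `|tensor_c0 x j| <= \prod_(i < m) l2norm (x i).
Proof.
move=> x_l2; rewrite /tensor_c0; case: (pickle_inv j) => [f|].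
  rewrite normr_prod; apply: ler_prod => i _.
  by rewrite normr_ge0 abs_le_l2norm.
by rewrite normr0; apply: prodr_ge0 => i _; exact: l2norm_ge0.
Qed.

Lemma pickle_ffun_large m N : exists M, forall f : {ffun 'I_m -> nat},
  (M < pickle f)%N -> exists i, (N <= f i)%N.
Proof.
exists (\max_(g : {ffun 'I_m -> 'I_N}) pickle [ffun i => (g i : nat)]) => f M_lt.
case: (boolP [exists i, (N <= f i)%N]) => [/existsP//|/existsPn f_lt].
have f_ltN i : (f i < N)%N by rewrite ltnNge f_lt.
pose g := [ffun i => Ordinal (f_ltN i)].
have g_f : [ffun i => (g i : nat)] = f by apply/ffunP => i; rewrite !ffunE.
move: M_lt; rewrite -g_f ltnNge.
by rewrite (leq_bigmax (F := fun h : {ffun 'I_m -> 'I_N} => pickle [ffun i => (h i : nat)])).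
Qed.

Lemma tensor_c0_in_c0 m (x : 'I_m -> nat -> R) :
  (forall i, in_l2 (x i)) -> in_c0 (tensor_c0 x).
Proof.
move=> x_l2; apply/cvgr0Pnorm_lt => e e_gt0.
pose K := \prod_(i < m) (l2norm (x i) + 1).
have K_gt0 : 0 < K by apply: prodr_gt0 => i _; rewrite ltr_wpDl ?l2norm_ge0.
have [N _ x_small] : \forall t \near \oo, forall i, `|x i t| < e / K.
  apply: filter_forall => i.
  by apply: (cvgr0_norm_lt _ (in_l2_cvg0 (x_l2 i))); rewrite divr_gt0.
have [M M_large] := pickle_ffun_large m N.
exists M.+1 => // j /= M_lt_j; rewrite /tensor_c0.
case f_j: (pickle_inv j) => [f|]; last by rewrite normr0.
have pickle_f : pickle f = j by have := @pickle_invK {ffun 'I_m -> nat} j; rewrite f_j.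
have [i Nfi] : exists i, (N <= f i)%N by apply: M_large; rewrite pickle_f.
have others_le : \prod_(k < m | k != i) `|x k (f k)| <= K.
  apply: (@le_trans _ _ (\prod_(k < m | k != i) (l2norm (x k) + 1))).
    apply: ler_prod => k _; rewrite normr_ge0 /=.
    by apply: le_trans (abs_le_l2norm _ (x_l2 k)) _; rewrite lerDl.
  rewrite [leRHS](bigD1 i) //= ler_peMl ?lerDr ?l2norm_ge0 //.
  by apply: prodr_ge0 => k _; rewrite addr_ge0 ?l2norm_ge0.
rewrite normr_prod (bigD1 i) //=.
apply: le_lt_trans (ler_wpM2l (normr_ge0 _) others_le) _.
by rewrite -ltr_pdivlMr // x_small.
Qed.

Lemma tensor_c0_bounded m : bounded_mlinear_l2_c0 (@tensor_c0 m).
Proof.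
split; first exact: tensor_c0_in_c0.
split; first by move=> x i a u v _ _ _ j; exact: tensor_c0_upd.
exists 1 => x x_l2; rewrite mul1r; apply: ge_sup; first by exists `|tensor_c0 x 0|, 0%N.
by move=> _ [j _ <-]; exact: abs_tensor_c0_le.
Qed.

Definition unit_vec (k : nat) : nat -> R := fun t => (t == k)%:R.

Lemma unit_vec_supp k t : (k < t)%N -> unit_vec k t = 0.
Proof. by move=> k_lt_t; rewrite /unit_vec gtn_eqF. Qed.

Lemma in_l2_unit_vec k : in_l2 (unit_vec k).
Proof. exact: in_l2_fin_supp (@unit_vec_supp k). Qed.

Definition unit_comb (a : nat -> R) r t := \sum_(k < r) a k * unit_vec k t.

Lemma unit_comb_supp a r t : (r <= t)%N -> unit_comb a r t = 0.
Proof.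
move=> r_le_t; rewrite /unit_comb big1 // => k _.
by rewrite unit_vec_supp ?mulr0 // (leq_trans (ltn_ord k)).
Qed.

Lemma dual_ball_l2_unit_comb phi a r : dual_ball_l2 phi ->
  phi (unit_comb a r) = \sum_(k < r) a k * phi (unit_vec k).
Proof.
move=> [phi_lin phi_le]; elim: r => [|r IHr].
  have := phi_le _ (in_l2_fin_supp (@unit_comb_supp a 0)).
  by rewrite (l2norm_fin_supp (@unit_comb_supp a 0)) !big_ord0 sqrtr0 normr_le0 => /eqP.
have -> : unit_comb a r.+1 = (fun t => a r * unit_vec r t + unit_comb a r t).
  by apply: funext => t; rewrite /unit_comb big_ord_recr /= addrC.
rewrite phi_lin ?IHr ?big_ord_recr 1?addrC //; first exact: in_l2_unit_vec.
exact: in_l2_fin_supp (@unit_comb_supp a r).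
Qed.

Lemma weak_norm_l2_unit_vec_le1 n : weak_norm_l2 2 (fun k : 'I_n => unit_vec k) <= 1.
Proof.
rewrite weak_norm_l2E; apply: ge_sup.
  exists 0, (fun=> 0); first by split=> *; rewrite ?mulr0 ?addr0 ?normr0 ?l2norm_ge0.
  by rewrite big1 ?sqrtr0 // => k _; rewrite expr0n.
move=> _ [phi phi_ball <-]; set A := \sum_(k < n) phi (unit_vec k) ^+ 2.
pose a k := phi (unit_vec k).
have comb_a (j : 'I_n) : unit_comb a n j = a j.
  rewrite /unit_comb (bigD1 j) //= /unit_vec eqxx mulr1 big1 ?addr0 // => k k_neq_j.
  by move: k_neq_j; rewrite eq_sym -(inj_eq val_inj) => /negbTE ->; rewrite mulr0.
have A_le : A <= Num.sqrt A.
  have := phi_ball.2 _ (in_l2_fin_supp (@unit_comb_supp a n)).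
  rewrite (l2norm_fin_supp (@unit_comb_supp a n)) dual_ball_l2_unit_comb //.
  under [in X in _ <= X -> _]eq_bigr do rewrite comb_a.
  rewrite /a /=; under eq_bigr do rewrite -expr2.
  by rewrite -/A ger0_norm ?sum_sqr_ge0.
have sA_ge0 := sqrtr_ge0 A.
have : Num.sqrt A ^+ 2 <= Num.sqrt A by rewrite sqr_sqrtr ?sum_sqr_ge0.
nra.
Qed.

Lemma c0norm_tensor_unit_vec_ge1 m n (kk : {ffun 'I_m -> 'I_n}) :
  1 <= c0norm (tensor_c0 (fun i => unit_vec (kk i))).
Proof.
pose f : {ffun 'I_m -> nat} := [ffun i => (kk i : nat)].
have := abs_le_c0norm (pickle f) (tensor_c0_in_c0 (fun i => @in_l2_unit_vec (kk i))).
by rewrite /tensor_c0 pickleK_inv big1 ?normr1 // => i _; rewrite /unit_vec ffunE eqxx.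
Qed.

Lemma exponent_le_of_powR_bound (a s C : R) :
  (forall n, (0 < n)%N -> powR n%:R a <= C * powR n%:R s) -> a <= s.
Proof.
move=> pow_le; rewrite leNgt; apply/negP => s_lt_a.
have C_ge1 : 1 <= C by have := pow_le 1%N isT; rewrite !powR1 mulr1.
have powd_le n : (0 < n)%N -> powR n%:R (a - s) <= C.
  move=> n_gt0; rewrite powRB ?pnatr_eq0 -?lt0n ?n_gt0 ?implybT //.
  by rewrite ler_pdivrMr ?powR_gt0 ?ltr0n //; exact: pow_le.
pose y := powR C (a - s)^-1.
have y_ge0 : 0 <= y by exact: powR_ge0.
pose n := (Num.Def.archi_bound y).+1.
have y_lt_n : y < n%:R by apply: lt_le_trans (archi_boundP y_ge0) _; rewrite ler_nat.
have := powd_le n isT; apply/negP; rewrite -ltNge.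
have -> : C = powR y (a - s).
  by rewrite /y -powRrM mulVf ?powRr1 ?subr_eq0 ?gt_eqF ?(le_trans ler01).
by apply: gt0_ltr_powR; rewrite ?subr_gt0 // nnegrE (le_trans y_ge0 (ltW y_lt_n)).
Qed.

Lemma admissible_exponent_ge m s : admissible_exponent m (2 : R) 2 s -> m%:R / 2 <= s.
Proof.
move=> /(_ _ (tensor_c0_bounded m)) [C [C_ge0 C_le]].
apply: (exponent_le_of_powR_bound (C := C)) => n n_gt0.
have := C_le n (fun _ k => unit_vec k) n_gt0 (fun _ _ => @in_l2_unit_vec _).
set W := \prod_(i < m) _.
have W_le1 : W <= 1.
  apply: prodr_ile1 => i _.
  by rewrite weak_norm_l2_unit_vec_le1 weak_norm_l2_ge0 // => k; exact: in_l2_unit_vec.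
have CW_le : C * powR n%:R s * W <= C * powR n%:R s.
  by rewrite -[leRHS]mulr1 ler_wpM2l ?mulr_ge0 ?powR_ge0.
move=> /le_trans/(_ CW_le); apply: le_trans.
rewrite powR_sum_sqr powR_natr_half // ler_sqrt ?sum_sqr_ge0 // -[_ ^+ m]mulr1 -sum_ffun_cst.
apply: ler_sum => kk _; exact: exprn_ege1 (c0norm_tensor_unit_vec_ge1 kk).
Qed.

End SequenceSpaces.

Theorem mainTheorem3 (R : realType) (m : nat) (hm : (0 < m)%N) :
  eta_mult_l2_c0 m (2 : R) 2 = ((m%:R / 2 : R))%:E.
Proof.
(* The argument also covers [m = 0]. *)
apply/eqP; rewrite eq_le; apply/andP; split.
  apply: ereal_inf_lbound; exists (m%:R / 2) => //.
  exact: (@admissible_exponent_half R m).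
by apply/ereal_infP => _ [s s_adm <-]; rewrite lee_fin admissible_exponent_ge.
Qed.
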